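(* Let $C>0$ and suppose the event holds that $\sum_{t=\tau_1}^{\tau_2}\mathbb E_t[M_t(g,a)]\le2\sum_{t=\tau_1}^{\tau_2}M_t(g,a)+C$ for all $g\in\mathcal G$, $a\in\mathcal A$ and $1\le\tau_1\le\tau_2\le T$. Assume $g^\star_a\in\mathcal G$ for all $a$. Then for all $a\in\mathcal A$ and $2\le k\le m\le M$: (1) $g^\star_a\in\hat{\mathcal G}_m\big(\frac{C}{2(\tau_m-1)},a\big)$; (2) for all $\beta\ge0$, $\hat{\mathcal G}_m(\beta,a)\subseteq\tilde{\mathcal G}_m\big(2\beta+\frac{C}{\tau_m-1},a\big)$; (3) for all $\beta\ge0$, $\hat{\mathcal G}_m(\beta,a)\subseteq\hat{\mathcal G}_k\big(\frac{\tau_m-1}{\tau_k-1}\beta+\frac{C}{\tau_k-1},a\big)$; (4) with $\beta_m=\frac{(M-m+1)C}{\tau_m-1}$ and $\mathcal F_m=\prod_{a}\hat{\mathcal G}_m(\beta_m,a)$ for $m\ge2$, $\mathcal F_1=\mathcal G^{\mathcal A}$: $f^\star\in\mathcal F_m$ for all $m$, and $\mathcal F_m\subseteq\mathcal F_{m-1}\subseteq\dots\subseteq\mathcal F_1$.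
   Context: Setting: $\mathcal A=\{1,\dots,K\}$, $D$ a distribution over $(x,r)\in\mathcal X\times[0,1]^K$; in rounds $t=1,\dots,T$, $(x_t,r_t)\sim D$ independently of the past, $a_t$ is chosen from $x_t$, past observations and independent randomness. $\mathcal G$ is a class of functions $\mathcal X\to[0,1]$, $g^\star_a(x)=\mathbb E[r(a)\mid x]$, $f^\star(x,a)=g^\star_a(x)$. $\mathcal J_t=\sigma((x_s,a_s,r_s)_{s<t})$, $\mathbb E_t=\mathbb E[\cdot\mid\mathcal J_t]$; $M_t(g,a)=\big((g(x_t)-r_t(a))^2-(g^\star_a(x_t)-r_t(a))^2\big)\mathbf 1\{a=a_t\}$. Epochs: $\tau_m=2^{m-1}$; $M$ is the index of the epoch (rounds $\tau_m,\dots,\tau_{m+1}-1$) containing $T$. For $m\ge2$: $\hat{\mathcal R}_m(g,a)=\frac1{\tau_m-1}\sum_{s<\tau_m}(g(x_s)-r_s(a_s))^2\mathbf 1\{a_s=a\}$, $\hat{\mathcal G}_m(\beta,a)=\{g\in\mathcal G:\hat{\mathcal R}_m(g,a)-\min_{g'\in\mathcal G}\hat{\mathcal R}_m(g',a)\le\beta\}$ (minimum assumed attained), and $\tilde{\mathcal G}_m(\beta,a)=\{g\in\mathcal G:\frac1{\tau_m-1}\sum_{t=1}^{\tau_m-1}\mathbb E_t[M_t(g,a)]\le\beta\}$. *)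

From mathcomp Require Import all_boot all_order all_algebra.
From mathcomp Require Import all_classical all_reals all_analysis.
Set Implicit Arguments. Unset Strict Implicit. Unset Printing Implicit Defensive.
Import Order.TTheory GRing.Theory Num.Theory.
Import numFieldNormedType.Exports.
Local Open Scope classical_set_scope.
Local Open Scope ring_scope.

Definition tau (m : nat) : nat := (2 ^ m.-1)%N.

Section Defs.
Variables (R : realType) (X : Type) (K : nat).
Variables (xs : nat -> X) (acts : nat -> 'I_K) (rs : nat -> 'I_K -> R).
Variable gstar : 'I_K -> X -> R.

Definition Mt (t : nat) (g : X -> R) (a : 'I_K) : R :=
  ((g (xs t) - rs t a) ^+ 2 - (gstar a (xs t) - rs t a) ^+ 2)
  * (a == acts t)%:R.

Definition Rhat (m : nat) (g : X -> R) (a : 'I_K) : R :=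
  (((tau m)%:R - 1)^-1) *
  \sum_(1 <= s < tau m) (g (xs s) - rs s (acts s)) ^+ 2 * (a == acts s)%:R.

Definition Ghat (G : set (X -> R)) (m : nat) (beta : R) (a : 'I_K) : set (X -> R) :=
  [set g | G g /\ Rhat m g a - inf [set Rhat m g' a | g' in G] <= beta].

(* \tilde G_m(beta,a), with Et t g a standing for E_t[M_t(g,a)]. *)
Definition Gtilde (Et : nat -> (X -> R) -> 'I_K -> R)
  (G : set (X -> R)) (m : nat) (beta : R) (a : 'I_K) : set (X -> R) :=
  [set g | G g /\
     ((tau m)%:R - 1)^-1 * \sum_(1 <= t < tau m) Et t g a <= beta].

Definition betam (Mep : nat) (C : R) (m : nat) : R :=
  ((Mep - m + 1)%:R * C) / ((tau m)%:R - 1).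

Definition Fm (G : set (X -> R)) (Mep : nat) (C : R) (m : nat)
  : set ('I_K -> X -> R) :=
  if (m <= 1)%N then [set f | forall a, G (f a)]
  else [set f | forall a, Ghat G m (betam Mep C m) a (f a)].
End Defs.

(* E_t[M_t(g,a)] computed in the model: (x_t, r_t) ~ D independent of the
   past, and conditionally on the past J_t and x_t = x the action a is
   chosen with probability pol t a x.  Hence
   E_t[M_t(g,a)] = E_{(x,r)~D}[ pol t a x ((g x - r a)^2 - (g*_a x - r a)^2) ]. *)
Definition Econd (R : realType) (d : measure_display) (Z : measurableType d)
  (D : probability Z R) (X : Type) (K : nat)
  (xof : Z -> X) (rof : Z -> 'I_K -> R) (gstar : 'I_K -> X -> R)
  (pol : nat -> 'I_K -> X -> R) (t : nat) (g : X -> R) (a : 'I_K) : R :=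
  \int[D]_(z in setT)
     (pol t a (xof z) *
      ((g (xof z) - rof z a) ^+ 2 - (gstar a (xof z) - rof z a) ^+ 2)).

From mathcomp Require Import all_boot all_order all_algebra.
From mathcomp Require Import all_classical all_reals all_analysis.
From mathcomp Require Import measurable_realfun ring lra zify.
Import Order.TTheory GRing.Theory Num.Theory.
Import numFieldNormedType.Exports.
Local Open Scope classical_set_scope.
Local Open Scope ring_scope.

Set Implicit Arguments. Unset Strict Implicit. Unset Printing Implicit Defensive.

(* Write L_n(g) for the empirical squared loss of g on action a over rounds
   1, ..., n-1.  Summing M_t(g,a) over a window of rounds gives the increment
   of the excess loss L(g) - L(g*_a), and E_t[M_t(g,a)] >= 0 because g*_a is
   the conditional mean of r(a) given x.  On the event, twice the excess loss
   increment over any window is therefore at least -C.  Over [1, tau_m) this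
   makes g*_a C/2-optimal for L_{tau_m}, while the empirical minimiser has
   nonpositive excess loss; over [tau_k, tau_m) it bounds the excess loss at
   epoch k by the one at epoch m plus C/2.  The four claims are then linear
   bookkeeping, and (tau_m - 1) beta_m + C = (tau_{m-1} - 1) beta_{m-1}
   turns (3) into the inclusions F_m <= F_{m-1}. *)

Section integral_comp_mul.
Context (R : realType) (dX : measure_display) (X : measurableType dX)
  (d : measure_display) (Z : measurableType d) (mu : {measure set Z -> \bar R})
  (xof : Z -> X).
Hypothesis mxof : measurable_fun setT xof.
Import HBNNSimple.

Lemma integral_nnsfun_comp_mul (f : {nnsfun X >-> R}) (w : Z -> R) :
  (forall z, 0 <= w z) -> measurable_fun setT w ->
  (\int[mu]_z (f (xof z) * w z)%:E =
   \sum_(y \in range f) (y%:E * \int[mu]_(z in xof @^-1` (f @^-1` [set y])) (w z)%:E))%E.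
Proof.
move=> w0 mw.
under eq_integral => z _.
  rewrite (fimfunE f (xof z)) fsbig_finite //= mulr_suml -sumEFin.
  over.
rewrite /= ge0_integral_sum //; last 2 first.
- move=> y; apply/measurable_EFinP; apply: measurable_funM => //.
  apply: measurable_funM => //.
  by apply: measurableT_comp => //; apply: measurableT_comp.
- move=> y z _; rewrite lee_fin mulr_ge0 //.
  exact: nnfun_muleindic_ge0.
rewrite fsbig_finite //=; apply: eq_bigr => y _.
have [y0|y0] := ltP y 0.
  rewrite preimage_nnfun0 // preimage_set0 integral_set0 mule0.
  under eq_integral do rewrite indic0 mulr0 mul0r.
  by rewrite integral0.
under eq_integral do rewrite -mulrA EFinM.
rewrite ge0_integralZl //; first last.
- by move=> z _; rewrite lee_fin mulr_ge0.
- apply/measurable_EFinP; apply: measurable_funM => //.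
  exact: measurableT_comp.
congr (_ * _)%E.
rewrite -[in RHS](setTI (xof @^-1` _)) integral_mkcondr epatch_indic.
by apply: eq_integral => z _ /=; rewrite !indicE -EFinM mulrC.
Qed.

Lemma integral_comp_mul_approx (h : X -> R) (mh : measurable_fun setT h)
    (w : Z -> R) : (forall x, 0 <= h x) -> (forall z, 0 <= w z) ->
    measurable_fun setT w ->
  (\int[mu]_z (h (xof z) * w z)%:E =
   limn (fun n => \int[mu]_z
     ((nnsfun_approx measurableT (iffRL (measurable_EFinP _ _) mh) n) (xof z)
      * w z)%:E))%E.
Proof.
move=> h0 w0 mw.
rewrite -monotone_convergence //.
- apply: eq_integral => z _; apply/esym/cvg_lim => //.
  under eq_fun do rewrite EFinM.
  rewrite EFinM; apply: cvgeZr => //.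
  have := @cvg_nnsfun_approx _ _ _ _ measurableT _
    (iffRL (measurable_EFinP _ _) mh) _ (xof z) I.
  by apply => x _; rewrite lee_fin.
- move=> n; apply/measurable_EFinP; apply: measurable_funM => //.
  exact: measurableT_comp.
- by move=> n z _; rewrite lee_fin mulr_ge0.
- move=> z _ m n mn; rewrite lee_fin ler_wpM2r //.
  exact/lefP/nd_nnsfun_approx.
Qed.

(* Both sides are limits of the same sums over the level sets of the simple
   approximations of [h]. *)
Lemma eq_integral_comp_mul (h : X -> R) (w1 w2 : Z -> R) :
  measurable_fun setT h -> (forall x, 0 <= h x) ->
  (forall z, 0 <= w1 z) -> measurable_fun setT w1 ->
  (forall z, 0 <= w2 z) -> measurable_fun setT w2 ->
  (forall B, measurable B -> \int[mu]_(z in xof @^-1` B) (w1 z)%:E =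
                             \int[mu]_(z in xof @^-1` B) (w2 z)%:E)%E ->
  (\int[mu]_z (h (xof z) * w1 z)%:E = \int[mu]_z (h (xof z) * w2 z)%:E)%E.
Proof.
move=> mh h0 w10 mw1 w20 mw2 w12.
rewrite (integral_comp_mul_approx mh h0 w10 mw1).
rewrite (integral_comp_mul_approx mh h0 w20 mw2).
congr (limn _); apply/funext => n.
rewrite !integral_nnsfun_comp_mul //.
by apply: eq_fsbigr => y _; rewrite w12.
Qed.

End integral_comp_mul.

Lemma mulr_in01 (R : numDomainType) (x y : R) :
  0 <= x <= 1 -> 0 <= y <= 1 -> 0 <= x * y <= 1.
Proof. by move=> /andP[x0 x1] /andP[y0 y1]; rewrite mulr_ge0 ?mulr_ile1. Qed.

Lemma in01_in11 (R : numDomainType) (v : R) : 0 <= v <= 1 -> -1 <= v <= 1.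
Proof. by move=> /andP[v0 v1]; rewrite v1 (le_trans _ v0) ?lerN10. Qed.

Section conditional_mean.
Context (R : realType) (dX : measure_display) (X : measurableType dX)
  (d : measure_display) (Z : measurableType d) (D : probability Z R)
  (xof : Z -> X) (s : X -> R) (r : Z -> R).
Hypotheses (mxof : measurable_fun setT xof) (ms : measurable_fun setT s)
  (mr : measurable_fun setT r).
Hypotheses (s01 : forall x, 0 <= s x <= 1) (r01 : forall z, 0 <= r z <= 1).
Hypothesis s_cond_mean : forall B, measurable B ->
  (\int[D]_(z in xof @^-1` B) (r z)%:E = \int[D]_(z in xof @^-1` B) (s (xof z))%:E)%E.

Lemma integrable_in11 (f : Z -> R) :
  measurable_fun setT f -> (forall z, -1 <= f z <= 1) -> D.-integrable setT (EFin \o f).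
Proof.
move=> mf f1; apply: measurable_bounded_integrable => //.
  by rewrite ltey_eq fin_num_measure.
exists 1; split => // c c1 z _; apply: le_trans (ltW c1).
by rewrite ler_norml.
Qed.

Lemma integrable_comp_mul (h : X -> R) (u : Z -> R) :
  measurable_fun setT h -> measurable_fun setT u ->
  (forall x, 0 <= h x <= 1) -> (forall z, -1 <= u z <= 1) ->
  D.-integrable setT (EFin \o (fun z => h (xof z) * u z)).
Proof.
move=> mh mu_meas h01 u1; apply: integrable_in11 => [|z].
  by apply: measurable_funM => //; exact: measurableT_comp.
have /andP[h0 h1] := h01 (xof z); have /andP[u_ge u_le] := u1 z.
by apply/andP; split; nra.
Qed.

Lemma Rintegral_comp_mul_residual (h : X -> R) :
  measurable_fun setT h -> (forall x, 0 <= h x <= 1) ->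
  \int[D]_(z in setT) (h (xof z) * (s (xof z) - r z)) = 0.
Proof.
move=> mh h01; have msx : measurable_fun setT (s \o xof) by exact: measurableT_comp.
under eq_Rintegral do rewrite mulrBr.
rewrite RintegralB //; last 2 first.
- by apply: integrable_comp_mul => // z; apply: in01_in11.
- by apply: integrable_comp_mul => // z; apply: in01_in11.
apply/eqP; rewrite subr_eq0; apply/eqP; congr fine.
apply/esym/(eq_integral_comp_mul mxof) => //.
- by move=> x; have /andP[] := h01 x.
- by move=> z; have /andP[] := r01 z.
- by move=> z; have /andP[] := s01 (xof z).
Qed.

(* [s] is the conditional mean of [r] given [xof], so the cross term
   [2 p (g - s) (s - r)] of [(g - r)^2 - (s - r)^2 = (g - s)^2 + 2 (g - s) (s - r)]
   integrates to zero. *)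
Lemma Rintegral_sqloss_excess_ge0 (p g : X -> R) :
  measurable_fun setT p -> measurable_fun setT g ->
  (forall x, 0 <= p x <= 1) -> (forall x, 0 <= g x <= 1) ->
  0 <= \int[D]_(z in setT) (p (xof z) * ((g (xof z) - r z) ^+ 2 - (s (xof z) - r z) ^+ 2)).
Proof.
move=> mp mg p01 g01.
pose A z := p (xof z) * (g (xof z) - s (xof z)) ^+ 2.
pose U z := (p (xof z) * g (xof z)) * (s (xof z) - r z).
pose V z := (p (xof z) * s (xof z)) * (s (xof z) - r z).
have mpg : measurable_fun setT (fun x => p x * g x) by exact: measurable_funM.
have mps : measurable_fun setT (fun x => p x * s x) by exact: measurable_funM.
have pg01 x : 0 <= p x * g x <= 1 by apply: mulr_in01.
have ps01 x : 0 <= p x * s x <= 1 by apply: mulr_in01.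
have mres : measurable_fun setT (fun z => s (xof z) - r z).
  by apply: measurable_funB => //; exact: measurableT_comp.
have res1 z : -1 <= s (xof z) - r z <= 1.
  by have /andP[? ?] := s01 (xof z); have /andP[? ?] := r01 z; apply/andP; split; lra.
have iU : D.-integrable setT (EFin \o U) by exact: integrable_comp_mul mpg mres pg01 res1.
have iV : D.-integrable setT (EFin \o V) by exact: integrable_comp_mul mps mres ps01 res1.
have iA : D.-integrable setT (EFin \o A).
  apply: (integrable_comp_mul (h := p)) => // [|z].
    by apply: measurable_funX; apply: measurable_funB => //; exact: measurableT_comp.
  apply: in01_in11; rewrite sqr_ge0 /=.
  by have /andP[? ?] := g01 (xof z); have /andP[? ?] := s01 (xof z); rewrite expr2; nra.
rewrite (@eq_Rintegral _ _ _ D setT (fun z => (A z + 2 * U z) - 2 * V z)); last first.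
  by move=> z _; rewrite /A /U /V; ring.
rewrite RintegralB //; last 2 first.
- exact: (integrableD _ iA (integrableZl _ 2 iU)).
- exact: (integrableZl _ 2 iV).
rewrite RintegralD ?RintegralZl //; last exact: (integrableZl _ 2 iU).
rewrite (Rintegral_comp_mul_residual mpg pg01) (Rintegral_comp_mul_residual mps ps01).
rewrite !mulr0 addr0 subr0; apply: Rintegral_ge0 => z _.
by rewrite /A mulr_ge0 ?sqr_ge0 //; have /andP[] := p01 (xof z).
Qed.

End conditional_mean.

Lemma inf_image_min (R : realType) (T : Type) (A : set T) (f : T -> R) (x : T) :
  A x -> (forall y, A y -> f x <= f y) -> inf [set f y | y in A] = f x.
Proof.
move=> Ax fx; have lbx : lbound [set f y | y in A] (f x) by move=> _ [y Ay <-]; exact: fx.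
apply/le_anti/andP; split; last by apply: lb_le_inf => //; exists (f x), x.
by apply: ge_inf; [exists (f x) | exists x].
Qed.

Lemma tau_ge2 (m : nat) : (2 <= m)%N -> (2 <= tau m)%N.
Proof. by case: m => [|[|m]] //= _; rewrite /tau expnS leq_pmulr // expn_gt0. Qed.

Lemma leq_tau (k m : nat) : (k <= m)%N -> (tau k <= tau m)%N.
Proof. by move=> km; rewrite /tau leq_exp2l // -!subn1 leq_sub2r. Qed.

Lemma tau_gt0 (m : nat) : (0 < tau m)%N.
Proof. by rewrite /tau expn_gt0. Qed.

Section epochs.
Variables (R : realType) (X : Type) (K : nat).
Variables (xs : nat -> X) (acts : nat -> 'I_K) (rs : nat -> 'I_K -> R).
Variables (gstar : 'I_K -> X -> R) (G : set (X -> R)).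
Variables (Et : nat -> (X -> R) -> 'I_K -> R) (T Mep : nat) (C : R).
Hypotheses (C_ge0 : 0 <= C) (tau_Mep_le : (tau Mep <= T)%N).
Hypotheses (G_gstar : forall a, G (gstar a)) (Et_ge0 : forall t g a, G g -> 0 <= Et t g a).
Hypothesis Rhat_min_attained : forall m a, (2 <= m)%N ->
  exists2 g0, G g0 & forall g, G g -> Rhat xs acts rs m g0 a <= Rhat xs acts rs m g a.
Hypothesis event : forall g a (t1 t2 : nat), G g -> (1 <= t1 <= t2)%N -> (t2 <= T)%N ->
  \sum_(t1 <= t < t2.+1) Et t g a <= 2 * \sum_(t1 <= t < t2.+1) Mt xs acts rs gstar t g a + C.

Definition sqloss (n : nat) (g : X -> R) (a : 'I_K) : R :=
  \sum_(1 <= s < n) (g (xs s) - rs s (acts s)) ^+ 2 * (a == acts s)%:R.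

Definition excess (n : nat) (g : X -> R) (a : 'I_K) : R :=
  sqloss n g a - sqloss n (gstar a) a.

Definition rounds_before (m : nat) : R := (tau m)%:R - 1.

Definition sqloss_min (m : nat) (a : 'I_K) (g0 : X -> R) : Prop :=
  G g0 /\ forall g, G g -> sqloss (tau m) g0 a <= sqloss (tau m) g a.

Lemma rounds_before_gt0 (m : nat) : (2 <= m)%N -> 0 < rounds_before m.
Proof. by move=> /tau_ge2 m2; rewrite /rounds_before subr_gt0 ltr1n. Qed.

Lemma excess_gstar (n : nat) (a : 'I_K) : excess n (gstar a) a = 0.
Proof. exact: subrr. Qed.

Lemma sum_Mt (n1 n2 : nat) (g : X -> R) (a : 'I_K) : (1 <= n1 <= n2)%N ->
  \sum_(n1 <= t < n2) Mt xs acts rs gstar t g a = excess n2 g a - excess n1 g a.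
Proof.
have prefix n : \sum_(1 <= t < n) Mt xs acts rs gstar t g a = excess n g a.
  rewrite /excess /sqloss -sumrB; apply: eq_bigr => t _; rewrite /Mt mulrBl.
  by case: eqP => [->|_] //=; rewrite !mulr0 subrr.
move=> /andP[n1_gt0 n12]; rewrite -!prefix (@big_cat_nat _ _ _ n1 1 n2) //=.
by rewrite addrAC subrr add0r.
Qed.

Lemma sum_Et_window (n1 n2 : nat) (g : X -> R) (a : 'I_K) :
  G g -> (1 <= n1 <= n2)%N -> (n2 <= T.+1)%N ->
  \sum_(n1 <= t < n2) Et t g a <= 2 * (excess n2 g a - excess n1 g a) + C.
Proof.
move=> Gg n12 n2T; rewrite -sum_Mt //.
have [n1_eq|n1_lt] := eqVneq n1 n2.
  by rewrite n1_eq !big_geq // mulr0 add0r.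
have n2_gt1 : (1 < n2)%N by move: n12 n1_lt; lia.
rewrite -(prednK (ltnW n2_gt1)); apply: event => //; lia.
Qed.

Lemma sum_Et_prefix (m : nat) (g : X -> R) (a : 'I_K) : (m <= Mep)%N -> G g ->
  \sum_(1 <= t < tau m) Et t g a <= 2 * excess (tau m) g a + C.
Proof.
move=> mM Gg; have excess1 : excess 1 g a = 0 by rewrite /excess /sqloss !big_geq ?subrr.
have := sum_Et_window a Gg (n1 := 1) (n2 := tau m); rewrite excess1 subr0; apply.
  by rewrite tau_gt0.
exact: leqW (leq_trans (leq_tau mM) tau_Mep_le).
Qed.

Lemma excess_lbound (m : nat) (g : X -> R) (a : 'I_K) : (m <= Mep)%N -> G g ->
  - C <= 2 * excess (tau m) g a.
Proof.
move=> mM Gg; have := sum_Et_prefix a mM Gg.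
have : 0 <= \sum_(1 <= t < tau m) Et t g a by apply: sumr_ge0 => t _; exact: Et_ge0.
lra.
Qed.

Lemma excess_window (k m : nat) (g : X -> R) (a : 'I_K) : (k <= m <= Mep)%N -> G g ->
  2 * excess (tau k) g a <= 2 * excess (tau m) g a + C.
Proof.
move=> /andP[km mM] Gg.
have := sum_Et_window a Gg (n1 := tau k) (n2 := tau m).
rewrite tau_gt0 leq_tau // leqW ?(leq_trans (leq_tau mM) tau_Mep_le) //.
have : 0 <= \sum_(tau k <= t < tau m) Et t g a by apply: sumr_ge0 => t _; exact: Et_ge0.
move=> sum_ge0 /(_ isT isT); lra.
Qed.

Lemma sqloss_min_exists (m : nat) (a : 'I_K) : (2 <= m)%N -> exists g0, sqloss_min m a g0.
Proof.
move=> m2; have [g0 Gg0 g0_min] := Rhat_min_attained a m2; exists g0; split => // g Gg.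
by have := g0_min g Gg; rewrite ler_pM2l // invr_gt0 rounds_before_gt0.
Qed.

Lemma excess_min_le0 (m : nat) (a : 'I_K) (g0 : X -> R) :
  sqloss_min m a g0 -> excess (tau m) g0 a <= 0.
Proof. by case=> _ g0_min; rewrite subr_le0 g0_min. Qed.

Lemma GhatE (m : nat) (beta : R) (a : 'I_K) (g0 g : X -> R) :
  (2 <= m)%N -> sqloss_min m a g0 ->
  Ghat xs acts rs G m beta a g <->
  G g /\ excess (tau m) g a - excess (tau m) g0 a <= rounds_before m * beta.
Proof.
move=> m2 [Gg0 g0_min]; rewrite /Ghat /=.
have inv_gt0 : 0 < (rounds_before m)^-1 by rewrite invr_gt0 rounds_before_gt0.
have -> : Rhat xs acts rs m g a - inf [set Rhat xs acts rs m g' a | g' in G] =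
          (rounds_before m)^-1 * (excess (tau m) g a - excess (tau m) g0 a).
  rewrite (inf_image_min Gg0); last by move=> g' Gg'; rewrite ler_pM2l // g0_min.
  by rewrite -mulrBr /excess; congr (_ * _); rewrite opprB addrA subrK.
by rewrite ler_pdivrMl ?rounds_before_gt0.
Qed.

Lemma gstar_Ghat (m : nat) (a : 'I_K) : (2 <= m <= Mep)%N ->
  Ghat xs acts rs G m (C / (2 * rounds_before m)) a (gstar a).
Proof.
move=> /andP[m2 mM]; have [g0 g0_min] := sqloss_min_exists a m2.
apply/(GhatE _ _ m2 g0_min); split => //; rewrite excess_gstar sub0r.
have -> : rounds_before m * (C / (2 * rounds_before m)) = C / 2.
  by field; rewrite gt_eqF ?rounds_before_gt0.
have := excess_lbound a mM g0_min.1; lra.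
Qed.

Lemma Ghat_sub_Gtilde (m : nat) (beta : R) (a : 'I_K) : (2 <= m <= Mep)%N ->
  Ghat xs acts rs G m beta a `<=` Gtilde Et G m (2 * beta + C / rounds_before m) a.
Proof.
move=> /andP[m2 mM] g; have [g0 g0_min] := sqloss_min_exists a m2.
move=> /(GhatE _ _ m2 g0_min) [Gg g_gap]; split => //.
rewrite ler_pdivrMl ?rounds_before_gt0 //.
have -> : rounds_before m * (2 * beta + C / rounds_before m) =
          2 * (rounds_before m * beta) + C.
  by field; rewrite gt_eqF ?rounds_before_gt0.
have := sum_Et_prefix a mM Gg; have := excess_min_le0 g0_min; lra.
Qed.

Lemma Ghat_sub_Ghat (k m : nat) (beta : R) (a : 'I_K) : (2 <= k <= m)%N -> (m <= Mep)%N ->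
  Ghat xs acts rs G m beta a `<=`
  Ghat xs acts rs G k (rounds_before m / rounds_before k * beta + C / rounds_before k) a.
Proof.
move=> /andP[k2 km] mM g; have m2 := leq_trans k2 km.
have [g0m g0m_min] := sqloss_min_exists a m2.
have [g0k g0k_min] := sqloss_min_exists a k2.
move=> /(GhatE _ _ m2 g0m_min) [Gg g_gap]; apply/(GhatE _ _ k2 g0k_min); split => //.
have -> : rounds_before k * (rounds_before m / rounds_before k * beta + C / rounds_before k) =
          rounds_before m * beta + C.
  by field; rewrite gt_eqF ?rounds_before_gt0.
have := excess_window a (k := k) (m := m) (g := g); rewrite km mM => /(_ isT Gg).
have := excess_lbound a (leq_trans km mM) g0k_min.1.
have := excess_min_le0 g0m_min; lra.
Qed.

Lemma Ghat_le_radius (m : nat) (beta1 beta2 : R) (a : 'I_K) : beta1 <= beta2 ->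
  Ghat xs acts rs G m beta1 a `<=` Ghat xs acts rs G m beta2 a.
Proof. by move=> b12 g [Gg g_gap]; split => //; exact: le_trans b12. Qed.

Lemma betam_pred (m : nat) : (3 <= m <= Mep)%N ->
  rounds_before m / rounds_before m.-1 * betam Mep C m + C / rounds_before m.-1 =
  betam Mep C m.-1.
Proof.
move=> /andP[m3 mM]; rewrite /betam -/(rounds_before m) -/(rounds_before m.-1).
have -> : (Mep - m.-1 + 1 = (Mep - m + 1) + 1)%N by lia.
rewrite natrD; field.
by rewrite !gt_eqF ?rounds_before_gt0 //; lia.
Qed.

Lemma gstar_Fm (m : nat) : (1 <= m <= Mep)%N -> Fm xs acts rs G Mep C m gstar.
Proof.
move=> /andP[m1 mM]; rewrite /Fm; case: ifP => [_ a|m_gt1 a] //=.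
have m2 : (2 <= m)%N by rewrite ltnNge m_gt1.
apply: Ghat_le_radius (gstar_Ghat a _); last by rewrite m2.
rewrite /betam -/(rounds_before m) invfM mulrA.
rewrite ler_pM2r ?invr_gt0 ?rounds_before_gt0 //.
have n_ge1 : 1 <= (Mep - m + 1)%:R :> R by rewrite ler1n addn1.
have := ler_wpM2r C_ge0 n_ge1; rewrite mul1r; have := C_ge0; lra.
Qed.

Lemma Fm_pred_sub (m : nat) : (2 <= m <= Mep)%N ->
  Fm xs acts rs G Mep C m `<=` Fm xs acts rs G Mep C m.-1.
Proof.
move=> /andP[m2 mM] f; rewrite /Fm ifF; last by lia.
case: ifP => m1 /= f_in a; first by have [] := f_in a.
rewrite -betam_pred; last by apply/andP; split; [lia | exact: mM].
by apply: Ghat_sub_Ghat (f_in a) => //; apply/andP; split; [lia | exact: leq_pred].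
Qed.

End epochs.

Theorem mainTheorem10 (R : realType) (K : nat)
  (dX : measure_display) (X : measurableType dX)
  (d : measure_display) (Z : measurableType d) (D : probability Z R)
  (xof : Z -> X) (rof : Z -> 'I_K -> R)
  (G : set (X -> R)) (gstar : 'I_K -> X -> R)
  (pol : nat -> 'I_K -> X -> R)
  (xs : nat -> X) (acts : nat -> 'I_K) (rs : nat -> 'I_K -> R)
  (T Mep : nat) (C : R) :
  measurable_fun setT xof ->
  (forall a, measurable_fun setT (fun z => rof z a)) ->
  (forall z a, 0 <= rof z a <= 1) ->
  (forall g, G g -> measurable_fun setT g /\ (forall x, 0 <= g x <= 1)) ->
  (* g*_a(x) = E[r(a) | x] *)
  (forall a, measurable_fun setT (gstar a)) ->
  (forall a (B : set X), measurable B ->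
     (\int[D]_(z in xof @^-1` B) (rof z a)%:E =
      \int[D]_(z in xof @^-1` B) (gstar a (xof z))%:E)%E) ->
  (* conditional action probabilities P(a_t = a | J_t, x_t = x) *)
  (forall t a, measurable_fun setT (pol t a)) ->
  (forall t a x, 0 <= pol t a x <= 1) ->
  (forall t x, \sum_(a < K) pol t a x = 1) ->
  (forall t a, 0 <= rs t a <= 1) ->
  (tau Mep <= T < tau Mep.+1)%N ->
  0 < C ->
  (forall m a, (2 <= m)%N ->
     exists2 g0, G g0 & forall g', G g' -> Rhat xs acts rs m g0 a <= Rhat xs acts rs m g' a) ->
  (* the event *)
  (forall g a (t1 t2 : nat), G g -> (1 <= t1 <= t2)%N -> (t2 <= T)%N ->
     \sum_(t1 <= t < t2.+1) Econd D xof rof gstar pol t g a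
       <= 2 * \sum_(t1 <= t < t2.+1) Mt xs acts rs gstar t g a + C) ->
  (forall a, G (gstar a)) ->
  (forall a (k m : nat), (2 <= k <= m)%N -> (m <= Mep)%N ->
    [/\ Ghat xs acts rs G m (C / (2 * ((tau m)%:R - 1))) a (gstar a),
        (forall beta, 0 <= beta ->
           Ghat xs acts rs G m beta a `<=`
           Gtilde (Econd D xof rof gstar pol) G m
                  (2 * beta + C / ((tau m)%:R - 1)) a) &
        (forall beta, 0 <= beta ->
           Ghat xs acts rs G m beta a `<=`
           Ghat xs acts rs G k
             (((tau m)%:R - 1) / ((tau k)%:R - 1) * beta + C / ((tau k)%:R - 1)) a)])
  /\ (forall m, (1 <= m <= Mep)%N -> Fm xs acts rs G Mep C m gstar)
  /\ (forall m, (2 <= m <= Mep)%N ->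
        Fm xs acts rs G Mep C m `<=` Fm xs acts rs G Mep C m.-1).
Proof.
move=> mxof mrof rof01 G_meas mgstar gstar_cond mpol pol01 _ _ /andP[tau_Mep_le _]
  /ltW C_ge0 Rhat_min event G_gstar.
pose Et := Econd D xof rof gstar pol.
have Et_ge0 t g a : G g -> 0 <= Et t g a.
  move=> Gg; have [mg g01] := G_meas g Gg; have [_ gstar01] := G_meas _ (G_gstar a).
  exact: (Rintegral_sqloss_excess_ge0 mxof (mgstar a) (mrof a) gstar01
    (fun z => rof01 z a) (gstar_cond a) (mpol t a) mg (pol01 t a) g01).
split; last split.
- move=> a k m /andP[k2 km] mM; have m2m : (2 <= m <= Mep)%N by rewrite (leq_trans k2 km).
  have k2m : (2 <= k <= m)%N by rewrite k2.
  split.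
  + by apply: (gstar_Ghat (Et := Et) (T := T) (Mep := Mep)).
  + by move=> beta _; apply: (Ghat_sub_Gtilde (Et := Et) (T := T) (Mep := Mep)).
  + by move=> beta _; apply: (Ghat_sub_Ghat (Et := Et) (T := T) (Mep := Mep)).
- by move=> m; apply: (gstar_Fm (Et := Et) (T := T) (Mep := Mep)).
- by move=> m; apply: (Fm_pred_sub (Et := Et) (T := T) (Mep := Mep)).
Qed.
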